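(* Let Assumptions 1 and 2 hold and let $x^\star=\arg\min F$. In Algorithm 2, suppose the $b$ indices of $\mathcal{B}_k$ are sampled independently from $\{1,\dots,n\}$ with probabilities $p_i=L_i/(nL_{\mathrm{avg}})$. Then, conditioned on $x_k$, $y_k$ and $\tilde x_s$, the error $\Delta_k=v_k-\nabla f(y_k)$ satisfies $$\mathbb{E}\|\Delta_k\|_{H^{-1}}^2\le\frac{2L_{\mathrm{avg}}^2}{b}\|x_k-y_k\|_H^2+\frac{8L_{\mathrm{avg}}}{b}\big(F(x_k)-F(x^\star)+F(\tilde x_s)-F(x^\star)\big).$$
   Context: Setting. $F(x)=f(x)+h(x)$ on $\mathbb{R}^d$, where $f=\frac1n\sum_{i=1}^n f_i$ with each $f_i:\mathbb{R}^d\to\mathbb{R}$ convex and differentiable, and $h:\mathbb{R}^d\to\mathbb{R}\cup\{+\infty\}$ is proper, convex, lower semicontinuous, with closed domain $\mathrm{dom}\,h$. $H$ is a fixed symmetric positive definite $d\times d$ matrix; $\|x\|_H=\sqrt{x^\top Hx}$, $\|x\|_{H^{-1}}=\sqrt{x^\top H^{-1}x}$, and $\langle x,y\rangle=x^\top y$. Assumption 1: each $f_i$ is $L_i$-smooth w.r.t. the $H$-norm, i.e. $\|\nabla f_i(x)-\nabla f_i(y)\|_{H^{-1}}\le L_i\|x-y\|_H$ for all $x,y$; $L_{\mathrm{avg}}=\frac1n\sum_{i=1}^nL_i$. Assumption 2: $f$ is $\mu$-strongly convex w.r.t. the $H$-norm for some $\mu>0$, i.e. $f(y)\ge f(x)+\langle\nabla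 f(x),y-x\rangle+\frac\mu2\|y-x\|_H^2$ for all $x,y$. In Algorithm 2, at inner step $k$ of outer iteration $s$ the current points are $x_k,y_k\in\mathbb{R}^d$ and the snapshot is $\tilde x_s$; the stochastic gradient is $v_k=\frac1b\sum_{i\in\mathcal B_k}\frac{\nabla f_i(y_k)-\nabla f_i(\tilde x_s)}{np_i}+\nabla f(\tilde x_s)$, where $\mathcal{B}_k$ is a multiset of $b$ sampled indices. *)

From Stdlib Require Import Reals.
From mathcomp Require Import all_boot.
Set Implicit Arguments.
Unset Strict Implicit.
Unset Printing Implicit Defensive.
Open Scope R_scope.

Definition rsum (T : finType) (F : T -> R) : R :=
  foldr (fun i acc => F i + acc) 0 (enum T).
Definition rprod (T : finType) (F : T -> R) : R :=
  foldr (fun i acc => F i * acc) 1 (enum T).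

Definition vec (d : nat) := 'I_d -> R.
Definition mat (d : nat) := 'I_d -> 'I_d -> R.

Definition vsub d (x y : vec d) : vec d := fun k => x k - y k.
Definition vadd d (x y : vec d) : vec d := fun k => x k + y k.
Definition vscale d (a : R) (x : vec d) : vec d := fun k => a * x k.

Definition dot d (x y : vec d) : R := rsum (fun k : 'I_d => x k * y k).
Definition matvec d (A : mat d) (x : vec d) : vec d :=
  fun i => rsum (fun j : 'I_d => A i j * x j).

Definition sqnorm d (A : mat d) (x : vec d) : R := dot x (matvec A x).
Definition wnorm d (A : mat d) (x : vec d) : R := sqrt (sqnorm A x).
(* Euclidean norm, used only to define differentiability / topology *)
Definition enorm d (x : vec d) : R := sqrt (dot x x).

Definition symmetric_pd d (H : mat d) : Prop :=
  (forall i j, H i j = H j i) /\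
  (forall x : vec d, (exists i, x i <> 0) -> 0 < sqnorm H x).

Definition is_inverse d (H Hinv : mat d) : Prop :=
  forall i j : 'I_d, rsum (fun k : 'I_d => H i k * Hinv k j) = if i == j then 1 else 0.

Definition has_gradient_at d (f : vec d -> R) (g : vec d) (x : vec d) : Prop :=
  forall eps, 0 < eps -> exists delta, 0 < delta /\
    forall y : vec d, enorm (vsub y x) < delta ->
      Rabs (f y - f x - dot g (vsub y x)) <= eps * enorm (vsub y x).

Definition convex_fun d (f : vec d -> R) : Prop :=
  forall (x y : vec d) (t : R), 0 <= t <= 1 ->
    f (vadd (vscale t x) (vscale (1 - t) y)) <= t * f x + (1 - t) * f y.

(* extended-real valued functions: None stands for +infinity *)
Definition ele (a b : option R) : Prop :=
  match a, b with
  | _, None => True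
  | None, Some _ => False
  | Some a, Some b => a <= b
  end.

Definition proper_fun d (h : vec d -> option R) : Prop := exists x, h x <> None.

Definition convex_ext d (h : vec d -> option R) : Prop :=
  forall (x y : vec d) (a b t : R), h x = Some a -> h y = Some b -> 0 <= t <= 1 ->
    exists c, h (vadd (vscale t x) (vscale (1 - t) y)) = Some c /\
              c <= t * a + (1 - t) * b.

Definition lsc_ext d (h : vec d -> option R) : Prop :=
  forall (x : vec d) (a : R),
    match h x with None => True | Some v => a < v end ->
    exists delta, 0 < delta /\ forall y : vec d, enorm (vsub y x) < delta ->
      match h y with None => True | Some w => a < w end.

(* dom h = {x | h x <> +oo} is closed: its complement is open *)
Definition closed_dom d (h : vec d -> option R) : Prop :=
  forall x : vec d, h x = None ->
    exists delta, 0 < delta /\ forall y : vec d, enorm (vsub y x) < delta -> h y = None.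

Definition Fext d (f : vec d -> R) (h : vec d -> option R) (x : vec d) : option R :=
  match h x with None => None | Some v => Some (f x + v) end.

(* Write a_i = grad f_i(y_k) - grad f_i(x~) and Z_i = a_i / (n p_i), so that the
   estimator error is Delta = (1/b) sum_j Z_{B_j} - m with m = sum_i p_i Z_i.
   After basic facts on finite sums and quadratic forms, the file develops:
   - smooth convex analysis: an L-smooth convex function satisfies the descent
     lemma and the co-coercivity bound ||g y - g x||^2 <= 2 L B(x, y), where B
     is the Bregman divergence; hence ||a_i||^2 <= 2 L_i^2 ||x_k - y_k||^2
     + 8 L_i (B_i(x_star, x_k) + B_i(x_star, x~));
   - composite optimality: since x_star minimises f + h with h convex, the
     Bregman divergence of f at x_star is bounded by the gap F(x) - F(x_star);
   - sampling: for b i.i.d. draws with law p, E ||(1/b) sum_j Z_{B_j} - m||^2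
     equals (1/b) sum_i p_i ||Z_i - m||^2 <= (1/b) sum_i p_i ||Z_i||^2;
   - the finite-sum setting: with p_i = L_i / (n L_avg) the weights in
     p_i ||Z_i||^2 average out to L_avg (the case L_avg = 0 is degenerate). *)
From HB Require Import structures.
From Stdlib Require Import Reals Lra FunctionalExtensionality Classical.
From mathcomp Require Import all_boot.
Set Implicit Arguments.
Unset Strict Implicit.
Open Scope R_scope.

Lemma Rplus_associative : associative Rplus. Proof. by move=> a b c; ring. Qed.
Lemma Rmult_associative : associative Rmult. Proof. by move=> a b c; ring. Qed.
HB.instance Definition _ :=
  Monoid.isComLaw.Build R 0 Rplus Rplus_associative Rplus_comm Rplus_0_l.
HB.instance Definition _ :=
  Monoid.isComLaw.Build R 1 Rmult Rmult_associative Rmult_comm Rmult_1_l.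
HB.instance Definition _ := Monoid.isMulLaw.Build R 0 Rmult Rmult_0_l Rmult_0_r.
HB.instance Definition _ :=
  Monoid.isAddLaw.Build R Rmult Rplus Rmult_plus_distr_r Rmult_plus_distr_l.

Lemma rsumE (T : finType) (F : T -> R) : rsum F = \big[Rplus/0]_(i : T) F i.
Proof.
rewrite -big_enum /rsum; elim: (enum T) => [|x s IH] /=; first by rewrite big_nil.
by rewrite big_cons IH.
Qed.

Lemma rprodE (T : finType) (F : T -> R) : rprod F = \big[Rmult/1]_(i : T) F i.
Proof.
rewrite -big_enum /rprod; elim: (enum T) => [|x s IH] /=; first by rewrite big_nil.
by rewrite big_cons IH.
Qed.

Section Sums.
Variable T : finType.
Implicit Types F G : T -> R.

Lemma rsum_ext F G : (forall i, F i = G i) -> rsum F = rsum G.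
Proof. by move=> e; rewrite !rsumE; apply: eq_bigr => i _. Qed.

Lemma rsum_add F G : rsum (fun i => F i + G i) = rsum F + rsum G.
Proof. by rewrite !rsumE big_split. Qed.

Lemma rsum_scal c F : rsum (fun i => c * F i) = c * rsum F.
Proof. by rewrite !rsumE big_distrr. Qed.

Lemma rsum_scalr c F : rsum (fun i => F i * c) = rsum F * c.
Proof. by rewrite !rsumE big_distrl. Qed.

Lemma rsum_sub F G : rsum (fun i => F i - G i) = rsum F - rsum G.
Proof.
rewrite (@rsum_ext _ (fun i => F i + -1 * G i)); last by move=> i; ring.
by rewrite rsum_add rsum_scal; ring.
Qed.

Lemma rsum_zero : rsum (fun _ : T => 0) = 0.
Proof. by rewrite rsumE big1. Qed.

Lemma rsum_le F G : (forall i, F i <= G i) -> rsum F <= rsum G.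
Proof.
move=> le_FG; rewrite !rsumE; apply: (big_ind2 (fun x y => x <= y)) => //.
- lra.
- by move=> *; lra.
Qed.

Lemma rsum_ge0 F : (forall i, 0 <= F i) -> 0 <= rsum F.
Proof. by move=> h; rewrite -rsum_zero; apply: rsum_le. Qed.

Lemma rsum_const c : rsum (fun _ : T => c) = INR #|T| * c.
Proof.
rewrite /rsum cardE; elim: (enum T) => [|x s IH]; first by rewrite /=; ring.
by rewrite [LHS]/= IH (_ : size (x :: s) = S (size s)) // S_INR; ring.
Qed.

Lemma rsum_delta (j : T) (X : T -> R) :
  rsum (fun j' => if j == j' then X j' else 0) = X j.
Proof.
rewrite rsumE (bigD1 j) //= eqxx big1 ?Rplus_0_r //.
by move=> i /negPf; rewrite eq_sym => ->.
Qed.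
End Sums.

Lemma rsum_swap (T U : finType) (F : T -> U -> R) :
  rsum (fun i => rsum (fun j => F i j)) = rsum (fun j => rsum (fun i => F i j)).
Proof.
rewrite rsumE (eq_bigr (fun i => \big[Rplus/0]_(j : U) F i j)) => [|i _];
  last by rewrite rsumE.
by rewrite exchange_big rsumE; apply: eq_bigr => j _; rewrite rsumE.
Qed.

Section QuadraticForms.
Variable d : nat.
Implicit Types x y z u a : vec d.

Lemma dot_comm x y : dot x y = dot y x.
Proof. by apply: rsum_ext => k; ring. Qed.

Lemma dot_add_l x y z : dot (vadd x y) z = dot x z + dot y z.
Proof. by rewrite /dot -rsum_add; apply: rsum_ext => k; rewrite /vadd; ring. Qed.

Lemma dot_sub_l x y z : dot (vsub x y) z = dot x z - dot y z.
Proof. by rewrite /dot -rsum_sub; apply: rsum_ext => k; rewrite /vsub; ring. Qed.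

Lemma dot_scale_l c x z : dot (vscale c x) z = c * dot x z.
Proof. by rewrite /dot -rsum_scal; apply: rsum_ext => k; rewrite /vscale; ring. Qed.

Lemma dot_add_r x y z : dot z (vadd x y) = dot z x + dot z y.
Proof. by rewrite !(dot_comm z) dot_add_l. Qed.

Lemma dot_sub_r x y z : dot z (vsub x y) = dot z x - dot z y.
Proof. by rewrite !(dot_comm z) dot_sub_l. Qed.

Lemma dot_scale_r c x z : dot z (vscale c x) = c * dot z x.
Proof. by rewrite !(dot_comm z) dot_scale_l. Qed.

Lemma matvec_sub (A : mat d) x y :
  matvec A (vsub x y) = vsub (matvec A x) (matvec A y).
Proof.
apply: functional_extensionality => i; rewrite /matvec /vsub -rsum_sub.
by apply: rsum_ext => k; ring.
Qed.

Lemma matvec_add (A : mat d) x y :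
  matvec A (vadd x y) = vadd (matvec A x) (matvec A y).
Proof.
apply: functional_extensionality => i; rewrite /matvec /vadd -rsum_add.
by apply: rsum_ext => k; ring.
Qed.

Lemma matvec_scale (A : mat d) c x : matvec A (vscale c x) = vscale c (matvec A x).
Proof.
apply: functional_extensionality => i; rewrite /matvec /vscale -rsum_scal.
by apply: rsum_ext => k; ring.
Qed.

Lemma sqnorm_sub (A : mat d) x y : sqnorm A (vsub x y) =
  sqnorm A x - dot x (matvec A y) - dot y (matvec A x) + sqnorm A y.
Proof. by rewrite /sqnorm matvec_sub !dot_sub_l !dot_sub_r; ring. Qed.

Lemma sqnorm_add (A : mat d) x y : sqnorm A (vadd x y) =
  sqnorm A x + dot x (matvec A y) + dot y (matvec A x) + sqnorm A y.
Proof. by rewrite /sqnorm matvec_add !dot_add_l !dot_add_r; ring. Qed.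

Lemma sqnorm_scale (A : mat d) c x : sqnorm A (vscale c x) = c ^ 2 * sqnorm A x.
Proof. by rewrite /sqnorm matvec_scale dot_scale_l dot_scale_r; ring. Qed.

Lemma sqnorm_add_le (A : mat d) : (forall x, 0 <= sqnorm A x) ->
  forall u v, sqnorm A (vadd u v) <= 2 * sqnorm A u + 2 * sqnorm A v.
Proof. by move=> psd u v; have := psd (vsub u v); rewrite sqnorm_sub sqnorm_add; lra. Qed.

Lemma sqnorm_sub_le (A : mat d) : (forall x, 0 <= sqnorm A x) ->
  forall u v, sqnorm A (vsub u v) <= 2 * sqnorm A u + 2 * sqnorm A v.
Proof. by move=> psd u v; have := psd (vadd u v); rewrite sqnorm_sub sqnorm_add; lra. Qed.

Lemma dot_rsum_l (T : finType) (c : T -> R) (X : T -> vec d) w :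
  rsum (fun i => c i * dot (X i) w) = dot (fun k => rsum (fun i => c i * X i k)) w.
Proof.
rewrite /dot (@rsum_ext _ _ (fun i => rsum (fun k => c i * X i k * w k))) => [|i];
  last by rewrite -rsum_scal; apply: rsum_ext => k; ring.
by rewrite rsum_swap; apply: rsum_ext => k; rewrite -rsum_scalr; apply: rsum_ext => i; ring.
Qed.

Lemma matvec_rsum (T : finType) (c : T -> R) (X : T -> vec d) (A : mat d) :
  matvec A (fun k => rsum (fun i => c i * X i k)) =
  (fun k => rsum (fun i => c i * matvec A (X i) k)).
Proof.
apply: functional_extensionality => l; rewrite /matvec.
rewrite (@rsum_ext _ _ (fun j => rsum (fun i => c i * (A l j * X i j)))) => [|j];
  last by rewrite -rsum_scal; apply: rsum_ext => i; ring.
by rewrite rsum_swap; apply: rsum_ext => i; rewrite -rsum_scal; apply: rsum_ext => j; ring.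
Qed.

Lemma dot_matvec_rsum_r (T : finType) (c : T -> R) (X : T -> vec d) (A : mat d) m :
  rsum (fun i => c i * dot m (matvec A (X i))) =
  dot m (matvec A (fun k => rsum (fun i => c i * X i k))).
Proof.
rewrite matvec_rsum dot_comm -dot_rsum_l.
by apply: rsum_ext => i; rewrite dot_comm.
Qed.

Lemma sqnorm_scaled_rsum (T : finType) (A : mat d) (c : R) (X : T -> vec d) :
  sqnorm A (fun k => c * rsum (fun j => X j k)) =
  c ^ 2 * rsum (fun j => rsum (fun j' => dot (X j) (matvec A (X j')))).
Proof.
have -> : (fun k => c * rsum (fun j => X j k)) = (fun k => rsum (fun j => c * X j k)).
  by apply: functional_extensionality => k; rewrite rsum_scal.
rewrite /sqnorm -dot_rsum_l -rsum_scal; apply: rsum_ext => j.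
by rewrite -dot_matvec_rsum_r -!rsum_scal; apply: rsum_ext => j'; ring.
Qed.

Lemma quad_sym (H : mat d) : (forall i j, H i j = H j i) ->
  forall x y, dot x (matvec H y) = dot y (matvec H x).
Proof.
move=> symH x y; rewrite /dot /matvec.
rewrite (@rsum_ext _ _ (fun i => rsum (fun j => x i * H i j * y j))) => [|i];
  last by rewrite -rsum_scal; apply: rsum_ext => j; ring.
rewrite rsum_swap; apply: rsum_ext => j.
by rewrite -rsum_scal; apply: rsum_ext => i; rewrite symH; ring.
Qed.

Section Inverse.
Variables H Hinv : mat d.
Hypothesis HSPD : symmetric_pd H.
Hypothesis HHinv : is_inverse H Hinv.

Lemma matvec_inv a : matvec H (matvec Hinv a) = a.
Proof.
apply: functional_extensionality => i; rewrite /matvec.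
rewrite (@rsum_ext _ _ (fun k => rsum (fun j => H i k * Hinv k j * a j))) => [|k];
  last by rewrite -rsum_scal; apply: rsum_ext => j; ring.
rewrite rsum_swap (@rsum_ext _ _ (fun j => if i == j then a j else 0)).
  exact: rsum_delta.
move=> j; rewrite rsum_scalr HHinv.
by case: (i == j); ring.
Qed.

Lemma sqnorm_inv a : sqnorm H (matvec Hinv a) = sqnorm Hinv a.
Proof. by rewrite /sqnorm matvec_inv dot_comm. Qed.

Lemma sqnorm_ge0 x : 0 <= sqnorm H x.
Proof.
case: (classic (exists i, x i <> 0)) => [/HSPD.2|x0]; first lra.
rewrite /sqnorm /dot -(rsum_zero 'I_d); right; apply: rsum_ext => k.
case: (classic (x k = 0)) => [->|nz]; first ring.
by case: x0; exists k.
Qed.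

Lemma sqnorm_inv_ge0 a : 0 <= sqnorm Hinv a.
Proof. by rewrite -sqnorm_inv; apply: sqnorm_ge0. Qed.

Lemma sqnorm_inv_eq0 a : sqnorm Hinv a <= 0 -> forall k, a k = 0.
Proof.
move=> a0 k; have w0 : forall j, matvec Hinv a j = 0.
  move=> j; apply: NNPP => nz.
  by have := HSPD.2 (matvec Hinv a) (ex_intro _ j nz); rewrite sqnorm_inv; lra.
rewrite -(matvec_inv a); move: (matvec Hinv a) w0 => w w0.
rewrite /matvec -(rsum_zero 'I_d); apply: rsum_ext => j.
by rewrite w0; ring.
Qed.

Lemma young a u c : 0 < c ->
  dot a u <= sqnorm Hinv a / (2 * c) + c / 2 * sqnorm H u.
Proof.
move=> c0; set w := matvec Hinv a.
have := sqnorm_ge0 (vsub w (vscale c u)).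
rewrite sqnorm_sub sqnorm_scale sqnorm_inv (quad_sym HSPD.1 w) !dot_scale_l.
rewrite /w matvec_inv dot_comm => nonneg.
apply: (Rmult_le_reg_l (2 * c)); first lra.
have -> : 2 * c * (sqnorm Hinv a / (2 * c) + c / 2 * sqnorm H u) =
  sqnorm Hinv a + c ^ 2 * sqnorm H u by field; lra.
lra.
Qed.

Lemma wnorm_le_sq L a u : 0 <= L -> wnorm Hinv a <= L * wnorm H u ->
  sqnorm Hinv a <= L ^ 2 * sqnorm H u.
Proof.
rewrite /wnorm => L0 le_au; have u0 := sqnorm_ge0 u.
case: (Rle_lt_dec (sqnorm Hinv a) 0) => a0; first nra.
have := sqrt_sqrt _ (Rlt_le _ _ a0); have := sqrt_sqrt _ u0.
have := sqrt_pos (sqnorm Hinv a); have := sqrt_pos (sqnorm H u); nra.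
Qed.
End Inverse.
End QuadraticForms.

Lemma enorm_scale d (c : R) (u : vec d) : enorm (vscale c u) = Rabs c * enorm u.
Proof.
rewrite /enorm dot_scale_l dot_scale_r -Rmult_assoc sqrt_mult_alt.
  by rewrite -Rsqr_def sqrt_Rsqr_abs.
by nra.
Qed.

(* If A is bounded by every instance of Young's inequality for the product
   K * S, then A <= K * S (optimise the free parameter c). *)
Lemma le_of_young_family A K S : 0 <= K -> 0 <= S ->
  (forall c, 0 < c -> A <= K ^ 2 * S / (2 * c) + c / 2 * S) -> A <= K * S.
Proof.
move=> K0 S0 bound; case: (Rle_lt_dec K 0) => [Kle0|Kpos]; last first.
  have := bound K Kpos.
  have -> : K ^ 2 * S / (2 * K) = K / 2 * S by field; lra.
  lra.
have K_eq : K = 0 by lra.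
subst K; apply: Rnot_lt_le => A0; have c0 : 0 < A / (S + 1) by apply: Rdiv_lt_0_compat; lra.
have := bound _ c0; have -> : 0 ^ 2 * S / (2 * (A / (S + 1))) = 0 by field; lra.
have : A / (S + 1) * (S + 1) = A by field; lra.
nra.
Qed.

Lemma nonneg_of_small_perturbations A K :
  (forall t, 0 < t <= 1 -> 0 <= A + t * K) -> 0 <= A.
Proof.
move=> bound; apply: Rnot_lt_le => A0; case: (Rle_lt_dec K 0) => K0.
  by have := bound 1; lra.
set t := - A / (2 * K - A).
have t01 : 0 < t <= 1.
  rewrite /t; split; first by apply: Rdiv_lt_0_compat; lra.
  by apply: (Rmult_le_reg_r (2 * K - A)); [lra | field_simplify; lra].
have := bound t t01; have -> : A + t * K = A * (K - A) / (2 * K - A) by rewrite /t; field; lra.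
have : A * (K - A) / (2 * K - A) < 0.
  by apply: (Rmult_lt_reg_r (2 * K - A)); [lra | field_simplify; [nra | lra]].
lra.
Qed.

Definition bregman d (f : vec d -> R) (g : vec d -> vec d) (x y : vec d) : R :=
  f y - f x - dot (g x) (vsub y x).

Section SmoothConvex.
Variable d : nat.
Variables (f : vec d -> R) (g : vec d -> vec d).
Hypothesis grad_f : forall x, has_gradient_at f (g x) x.

Lemma line_derivative x u t0 :
  derivable_pt_lim (fun t => f (vadd x (vscale t u))) t0
    (dot (g (vadd x (vscale t0 u))) u).
Proof.
move=> eps eps0; set x0 := vadd x (vscale t0 u); set N := enorm u.
have N0 : 0 <= N by apply: sqrt_pos.
have eps'0 : 0 < eps / (2 * (N + 1)) by apply: Rdiv_lt_0_compat; lra.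
have [del [del0 approx]] := grad_f x0 eps'0.
have step0 : 0 < del / (N + 1) by apply: Rdiv_lt_0_compat; lra.
exists (mkposreal _ step0) => h h0 /= small_h.
set y := vadd x (vscale (t0 + h) u).
have yx0 : vsub y x0 = vscale h u.
  by apply: functional_extensionality => k; rewrite /vsub /y /x0 /vadd /vscale; ring.
have absh : 0 < Rabs h by apply: Rabs_pos_lt.
have near : enorm (vsub y x0) < del.
  rewrite yx0 enorm_scale -/N.
  have : Rabs h * (N + 1) < del.
    have := Rmult_lt_compat_r (N + 1) _ _ ltac:(lra) small_h.
    by have -> : del / (N + 1) * (N + 1) = del by field; lra.
  nra.
have := approx y near; rewrite yx0 enorm_scale dot_scale_r -/N => err.
have -> : (f y - f x0) / h - dot (g x0) u = (f y - f x0 - h * dot (g x0) u) / h by field.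
set e := f y - f x0 - h * dot (g x0) u in err *.
rewrite /Rdiv Rabs_mult Rabs_inv; apply: (Rmult_lt_reg_r (Rabs h)) => //.
have -> : Rabs e * / Rabs h * Rabs h = Rabs e by field; lra.
have : eps / (2 * (N + 1)) * (2 * (N + 1)) = eps by field; lra.
nra.
Qed.

Lemma bregman_ge0 : convex_fun f -> forall x y, 0 <= bregman f g x y.
Proof.
move=> convf x y; rewrite /bregman; set u := vsub y x; set D := dot (g x) u.
apply: Rnot_lt_le => below.
have x0 : vadd x (vscale 0 u) = x.
  by apply: functional_extensionality => k; rewrite /vadd /vscale; ring.
have := line_derivative x u 0; rewrite x0 -/D => deriv.
have [del close] := deriv (D - (f y - f x)) ltac:(lra).
set h := Rmin (del / 2) 1; have del0 := cond_pos del.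
have h0 : 0 < h by apply: Rmin_pos; lra.
have h1 : h <= 1 by apply: Rmin_r.
have hdel : h < del by have := Rmin_l (del / 2) 1; rewrite -/h; lra.
have := close h ltac:(lra) ltac:(rewrite Rabs_pos_eq; lra).
rewrite Rplus_0_l x0 => /Rabs_def2 [_ slope].
have := convf y x h ltac:(lra).
have -> : vadd (vscale h y) (vscale (1 - h) x) = vadd x (vscale h u).
  by apply: functional_extensionality => k; rewrite /vadd /vscale /u /vsub; ring.
move=> chord.
have : (f (vadd x (vscale h u)) - f x) / h <= f y - f x.
  apply: (Rmult_le_reg_r h) => //.
  have -> : (f (vadd x (vscale h u)) - f x) / h * h = f (vadd x (vscale h u)) - f x
    by field; lra.
  lra.
lra.
Qed.

Section Lipschitz.
Variables (H Hinv : mat d) (L : R).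
Hypothesis HSPD : symmetric_pd H.
Hypothesis HHinv : is_inverse H Hinv.
Hypothesis L0 : 0 <= L.
Hypothesis lip_g : forall x y, wnorm Hinv (vsub (g x) (g y)) <= L * wnorm H (vsub x y).

(* Descent lemma: an L-smooth function lies below its tangent parabolas.
   The proof applies the mean value theorem to
   phi t = f (x + t u) - t <g x, u> - L/2 t^2 ||u||^2, whose derivative is <= 0. *)
Lemma bregman_le_smooth x y : bregman f g x y <= L / 2 * sqnorm H (vsub y x).
Proof.
rewrite /bregman; set u := vsub y x; set S := sqnorm H u; set D := dot (g x) u.
have S0 : 0 <= S by apply: sqnorm_ge0.
pose phi t := f (vadd x (vscale t u)) - D * t - L / 2 * S * (t * t).
pose phi' t := dot (g (vadd x (vscale t u))) u - D * 1 - L / 2 * S * (1 * t + t * 1).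
have deriv : forall t, 0 <= t <= 1 -> derivable_pt_lim phi t (phi' t).
  move=> t _; have d1 := line_derivative x u t.
  have d2 := derivable_pt_lim_scal id D t 1 (derivable_pt_lim_id t).
  have d3 := derivable_pt_lim_scal (id * id)%F (L / 2 * S) t _
    (derivable_pt_lim_mult id id t 1 1 (derivable_pt_lim_id t) (derivable_pt_lim_id t)).
  have := derivable_pt_lim_minus _ _ t _ _ (derivable_pt_lim_minus _ _ t _ _ d1 d2) d3.
  by have -> : phi = ((fun t => f (vadd x (vscale t u))) - mult_real_fct D id
    - mult_real_fct (L / 2 * S) (id * id))%F by apply: functional_extensionality.
have phi'_le0 : forall t, 0 <= t <= 1 -> phi' t <= 0.
  move=> t t01; set a := vsub (g (vadd x (vscale t u))) (g x).
  have a_small : sqnorm Hinv a <= (L * t) ^ 2 * S.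
    have := wnorm_le_sq HSPD L0 (lip_g (vadd x (vscale t u)) x).
    have -> : vsub (vadd x (vscale t u)) x = vscale t u.
      by apply: functional_extensionality => k; rewrite /vsub /vadd /vscale; ring.
    by rewrite sqnorm_scale -/S -/a; nra.
  have : dot a u <= (L * t) * S.
    apply: le_of_young_family => [|//|c c0]; first nra.
    have := young HSPD HHinv a u c0; rewrite -/S.
    have : sqnorm Hinv a / (2 * c) <= (L * t) ^ 2 * S / (2 * c).
      by apply: Rmult_le_compat_r => //; left; apply: Rinv_0_lt_compat; lra.
    lra.
  rewrite /phi' /a dot_sub_l -/D; nra.
have [c [mvt c01]] := MVT_cor2 phi phi' 0 1 ltac:(lra) deriv.
have := phi'_le0 c ltac:(lra); rewrite /phi in mvt.
have end1 : vadd x (vscale 1 u) = y.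
  by apply: functional_extensionality => k; rewrite /vadd /vscale /u /vsub; ring.
have end0 : vadd x (vscale 0 u) = x.
  by apply: functional_extensionality => k; rewrite /vadd /vscale; ring.
rewrite end1 end0 in mvt; nra.
Qed.

(* Co-coercivity: ||g y - g x||_{H^{-1}}^2 <= 2 L B(x, y).  Compare f at the
   gradient step z = y - (1/L) H^{-1} (g y - g x) using convexity at x and the
   descent lemma at y. *)
Lemma cocoercive : convex_fun f -> 0 < L ->
  forall x y, sqnorm Hinv (vsub (g y) (g x)) <= 2 * L * bregman f g x y.
Proof.
move=> convf Lpos x y; rewrite /bregman.
set a := vsub (g y) (g x); set w := matvec Hinv a; set z := vsub y (vscale (/ L) w).
have tangent := bregman_ge0 convf x z; have parabola := bregman_le_smooth y z.
rewrite /bregman in tangent parabola.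
have zy : vsub z y = vscale (- / L) w.
  by apply: functional_extensionality => k; rewrite /z /vsub /vscale; ring.
have zx : vsub z x = vsub (vsub y x) (vscale (/ L) w).
  by apply: functional_extensionality => k; rewrite /z /vsub /vscale; ring.
rewrite zy in parabola; rewrite zx in tangent.
rewrite sqnorm_scale (sqnorm_inv HHinv) dot_scale_r in parabola.
rewrite dot_sub_r dot_scale_r in tangent.
have gap : dot (g y) w - dot (g x) w = sqnorm Hinv a by rewrite -dot_sub_l.
set S := sqnorm Hinv a in parabola gap *; set P := dot (g x) (vsub y x) in tangent *.
have : S * / L <= 2 * (f y - f x - P).
  have : L / 2 * ((- / L) ^ 2 * S) = / L * S / 2 by field; lra.
  have : / L * dot (g y) w - / L * dot (g x) w = / L * S by rewrite -gap; ring.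
  lra.
move/(Rmult_le_compat_l L _ _ (Rlt_le _ _ Lpos)).
have -> : L * (S * / L) = S by field; lra.
nra.
Qed.

Lemma lipschitz0_const : L = 0 -> forall x y k, g x k = g y k.
Proof.
move=> L_eq x y k; have := wnorm_le_sq HSPD L0 (lip_g x y).
rewrite L_eq (_ : 0 ^ 2 * _ = 0); last by ring.
by move/(sqnorm_inv_eq0 HSPD HHinv)/(_ k); rewrite /vsub; lra.
Qed.

(* The gradient difference between y and s, split at x and compared to an
   anchor z: the Lipschitz bound controls g y - g x and co-coercivity controls
   g x - g z and g s - g z. *)
Lemma gradient_difference_bound : convex_fun f -> 0 < L -> forall x y s z,
  sqnorm Hinv (vsub (g y) (g s)) <=
  2 * L ^ 2 * sqnorm H (vsub x y) + 8 * L * (bregman f g z x + bregman f g z s).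
Proof.
move=> convf Lpos x y s z; have psd := sqnorm_inv_ge0 HSPD HHinv.
have -> : vsub (g y) (g s) = vadd (vsub (g y) (g x))
    (vsub (vsub (g x) (g z)) (vsub (g s) (g z))).
  by apply: functional_extensionality => k; rewrite /vadd /vsub; ring.
have split1 := sqnorm_add_le psd (vsub (g y) (g x))
  (vsub (vsub (g x) (g z)) (vsub (g s) (g z))).
have split2 := sqnorm_sub_le psd (vsub (g x) (g z)) (vsub (g s) (g z)).
have lip_yx := wnorm_le_sq HSPD L0 (lip_g y x).
have flip : vsub y x = vscale (-1) (vsub x y).
  by apply: functional_extensionality => k; rewrite /vscale /vsub; ring.
rewrite flip sqnorm_scale in lip_yx.
have coco_x := cocoercive convf Lpos z x; have coco_s := cocoercive convf Lpos z s.
lra.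
Qed.
End Lipschitz.
End SmoothConvex.

(* Compare
   F(x_star) with F along the segment towards x and let the step go to 0. *)
Lemma bregman_le_gap d (H : mat d) (f : vec d -> R) (gf : vec d -> vec d)
  (h : vec d -> option R) (K : R) :
  convex_ext h ->
  (forall x y, bregman f gf x y <= K / 2 * sqnorm H (vsub y x)) ->
  forall xst hst, h xst = Some hst -> (forall z, ele (Fext f h xst) (Fext f h z)) ->
  forall x hx, h x = Some hx -> bregman f gf xst x <= (f x + hx) - (f xst + hst).
Proof.
move=> convh smooth xst hst hst_eq opt x hx hx_eq; rewrite /bregman.
set u := vsub x xst; set G := dot (gf xst) u; set S := sqnorm H u.
suff: 0 <= G + hx - hst by lra.
apply: (@nonneg_of_small_perturbations _ (K / 2 * S)) => t t01.
have [c [hc c_le]] := convh x xst hx hst t hx_eq hst_eq ltac:(lra).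
set xt := vadd (vscale t x) (vscale (1 - t) xst) in hc.
have := opt xt; rewrite /Fext hst_eq hc /= => Fxt.
have := smooth xst xt; rewrite /bregman.
have -> : vsub xt xst = vscale t u.
  by apply: functional_extensionality => k; rewrite /xt /u /vsub /vadd /vscale; ring.
rewrite dot_scale_r sqnorm_scale -/G -/S => desc.
have : 0 <= t * (G + hx - hst + t * (K / 2 * S)) by nra.
move=> prod0; apply: (Rmult_le_reg_l t); lra.
Qed.

(* Minibatch sampling: B = (B_1, ..., B_b) are b independent draws from the
   law p on 'I_n, so the expectation of X is a sum over all such tuples. *)

Definition expect n b (p : 'I_n -> R) (X : {ffun 'I_b -> 'I_n} -> R) : R :=
  rsum (fun B : {ffun 'I_b -> 'I_n} => rprod (fun j => p (B j)) * X B).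

Definition wmean n d (p : 'I_n -> R) (Y : 'I_n -> vec d) : vec d :=
  fun k => rsum (fun i => p i * Y i k).

Section Sampling.
Variables n b : nat.
Variable p : 'I_n -> R.
Hypothesis p_sum1 : rsum p = 1.

Lemma expect_rsum (T : finType) (X : T -> {ffun 'I_b -> 'I_n} -> R) :
  expect p (fun B => rsum (fun t => X t B)) = rsum (fun t => expect p (X t)).
Proof.
by rewrite /expect -rsum_swap; apply: rsum_ext => B; rewrite rsum_scal.
Qed.

Lemma expect_ext (X X' : {ffun 'I_b -> 'I_n} -> R) :
  (forall B, X B = X' B) -> expect p X = expect p X'.
Proof. by move=> e; apply: rsum_ext => B; rewrite e. Qed.

Lemma expect_scal c (X : {ffun 'I_b -> 'I_n} -> R) :
  expect p (fun B => c * X B) = c * expect p X.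
Proof. by rewrite /expect -rsum_scal; apply: rsum_ext => B; ring. Qed.

Lemma expect_pair (U V : 'I_n -> R) (j1 j2 : 'I_b) :
  expect p (fun B => U (B j1) * V (B j2)) =
  if j1 == j2 then rsum (fun i => p i * (U i * V i))
  else rsum (fun i => p i * U i) * rsum (fun i => p i * V i).
Proof.
pose w j i := p i * (if j == j1 then U i else 1) * (if j == j2 then V i else 1).
have weight_at : forall (j0 : 'I_b) (X : 'I_b -> R),
    \big[Rmult/1]_j (if j == j0 then X j else 1) = X j0.
  by move=> j0 X; rewrite -big_mkcond big_pred1_eq.
rewrite /expect rsumE.
transitivity (\big[Rplus/0]_(B : {ffun 'I_b -> 'I_n}) \big[Rmult/1]_j w j (B j)).
  apply: eq_bigr => B _; rewrite rprodE /w !big_split /=.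
  by rewrite (weight_at _ (fun j => U (B j))) (weight_at _ (fun j => V (B j))) Rmult_assoc.
rewrite -bigA_distr_bigA /= (bigD1 j1) //=.
have other : forall j, j != j1 -> j != j2 -> \big[Rplus/0]_(i : 'I_n) w j i = 1.
  move=> j /negPf n1 /negPf n2; rewrite -p_sum1 rsumE.
  by apply: eq_bigr => i _; rewrite /w n1 n2; ring.
case: eqP => [e|ne]; first subst j2.
  rewrite [X in _ * X]big1 => [|j j_ne]; last exact: other.
  by rewrite Rmult_1_r rsumE; apply: eq_bigr => i _; rewrite /w eqxx; ring.
rewrite (bigD1 j2) /=; last by apply/eqP => e; apply: ne.
rewrite [X in _ * (_ * X)]big1 => [|j /andP [n1 n2]]; last exact: other.
have ne' : (j2 == j1) = false by apply/eqP => e; apply: ne.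
rewrite !rsumE Rmult_1_r; congr Rmult; apply: eq_bigr => i _; rewrite /w eqxx.
  by rewrite (_ : (j1 == j2) = false) //; [ring | apply/eqP].
by rewrite ne'; ring.
Qed.

Variables (d : nat) (A : mat d).

Lemma expect_form_pair (Y : 'I_n -> vec d) (j1 j2 : 'I_b) :
  expect p (fun B => dot (Y (B j1)) (matvec A (Y (B j2)))) =
  if j1 == j2 then rsum (fun i => p i * sqnorm A (Y i)) else sqnorm A (wmean p Y).
Proof.
have expand : forall y z : vec d,
    dot y (matvec A z) = rsum (fun k => rsum (fun l => A k l * (y k * z l))).
  move=> y z; rewrite /dot /matvec; apply: rsum_ext => k.
  by rewrite -rsum_scal; apply: rsum_ext => l; ring.
under expect_ext => B do rewrite expand.
rewrite expect_rsum; under rsum_ext => k do rewrite expect_rsum.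
under rsum_ext => k do under rsum_ext => l do
  rewrite expect_scal (expect_pair (fun i => Y i k) (fun i => Y i l)).
case: (j1 == j2); last first.
  by rewrite /sqnorm expand; apply: rsum_ext => k; apply: rsum_ext => l; rewrite /wmean.
transitivity (rsum (fun i => rsum (fun k => rsum (fun l =>
  p i * (A k l * (Y i k * Y i l)))))).
  rewrite [RHS]rsum_swap; apply: rsum_ext => k; rewrite [RHS]rsum_swap; apply: rsum_ext => l.
  by rewrite -rsum_scal; apply: rsum_ext => i; ring.
apply: rsum_ext => i; rewrite /sqnorm expand -rsum_scal; apply: rsum_ext => k.
by rewrite -rsum_scal.
Qed.

Lemma minibatch_mean_sqnorm (Y : 'I_n -> vec d) : (0 < b)%N ->
  (forall k, wmean p Y k = 0) ->
  expect p (fun B : {ffun 'I_b -> 'I_n} =>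
    sqnorm A (fun k => / INR b * rsum (fun j => Y (B j) k))) =
  / INR b * rsum (fun i => p i * sqnorm A (Y i)).
Proof.
move=> b_pos centred; have bR : INR b <> 0 by apply: not_0_INR; apply/eqP; rewrite -lt0n.
have mean0 : sqnorm A (wmean p Y) = 0.
  rewrite /sqnorm /dot -(rsum_zero 'I_d); apply: rsum_ext => k.
  by rewrite centred; ring.
under expect_ext => B do rewrite sqnorm_scaled_rsum.
rewrite expect_scal expect_rsum.
under rsum_ext => j do rewrite expect_rsum.
under rsum_ext => j do under rsum_ext => j' do rewrite expect_form_pair mean0.
under rsum_ext => j do rewrite (rsum_delta j (fun _ => rsum (fun i => p i * sqnorm A (Y i)))).
by rewrite rsum_const card_ord; field.
Qed.

Hypothesis A_psd : forall x, 0 <= sqnorm A x.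

Lemma variance_le_second_moment (Z : 'I_n -> vec d) :
  rsum (fun i => p i * sqnorm A (vsub (Z i) (wmean p Z))) <=
  rsum (fun i => p i * sqnorm A (Z i)).
Proof.
set m := wmean p Z.
have cross1 := dot_rsum_l p Z (matvec A m).
have cross2 := dot_matvec_rsum_r p Z A m.
rewrite -/(wmean p Z) -/m in cross1 cross2.
have -> : rsum (fun i => p i * sqnorm A (vsub (Z i) m)) =
    rsum (fun i => p i * sqnorm A (Z i)) - rsum (fun i => p i * dot (Z i) (matvec A m))
    - rsum (fun i => p i * dot m (matvec A (Z i))) + rsum p * sqnorm A m.
  rewrite -rsum_scalr -!rsum_sub -rsum_add; apply: rsum_ext => i.
  by rewrite sqnorm_sub; ring.
by rewrite cross1 cross2 p_sum1; have := A_psd m; rewrite /sqnorm; lra.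
Qed.

Lemma minibatch_variance (Z : 'I_n -> vec d) : (0 < b)%N ->
  expect p (fun B : {ffun 'I_b -> 'I_n} => sqnorm A (fun k =>
    / INR b * rsum (fun j => Z (B j) k) - wmean p Z k)) <=
  / INR b * rsum (fun i => p i * sqnorm A (Z i)).
Proof.
move=> b_pos; have bR : INR b <> 0 by apply: not_0_INR; apply/eqP; rewrite -lt0n.
set Y := fun i => vsub (Z i) (wmean p Z).
have centred : forall k, wmean p Y k = 0.
  move=> k; rewrite /wmean /Y /vsub.
  under rsum_ext => i do rewrite Rmult_minus_distr_l.
  by rewrite rsum_sub rsum_scalr p_sum1 /wmean; ring.
have -> : (fun B : {ffun 'I_b -> 'I_n} => sqnorm A (fun k =>
    / INR b * rsum (fun j => Z (B j) k) - wmean p Z k)) =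
    (fun B => sqnorm A (fun k => / INR b * rsum (fun j => Y (B j) k))).
  apply: functional_extensionality => B; congr sqnorm.
  apply: functional_extensionality => k; rewrite /Y /vsub rsum_sub rsum_const card_ord.
  by field.
rewrite minibatch_mean_sqnorm //.
apply: Rmult_le_compat_l; first by left; apply: Rinv_0_lt_compat; apply: lt_0_INR; apply/ltP.
exact: variance_le_second_moment.
Qed.
End Sampling.

Lemma expect_null_weights n b (p : 'I_n -> R) (X : {ffun 'I_b -> 'I_n} -> R) :
  (0 < b)%N -> (forall i, p i = 0) -> expect p X = 0.
Proof.
move=> b_pos p0; rewrite /expect -(rsum_zero {ffun 'I_b -> 'I_n}).
by apply: rsum_ext => B; rewrite rprodE (bigD1 (Ordinal b_pos)) //= p0; ring.
Qed.

Definition avg n (F : 'I_n -> R) : R := / INR n * rsum F.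

Lemma avg_le n (F G : 'I_n -> R) : (forall i, F i <= G i) -> avg F <= avg G.
Proof.
move=> le_FG; apply: Rmult_le_compat_l; last exact: rsum_le.
case: n F G le_FG => [|n] *; first by rewrite /= Rinv_0; lra.
by left; apply: Rinv_0_lt_compat; apply: lt_0_INR; apply/ltP.
Qed.

Lemma avg_add n (F G : 'I_n -> R) : avg (fun i => F i + G i) = avg F + avg G.
Proof. by rewrite /avg rsum_add; ring. Qed.

Lemma avg_scal n c (F : 'I_n -> R) : avg (fun i => c * F i) = c * avg F.
Proof. by rewrite /avg rsum_scal; ring. Qed.

Definition importance n (L : 'I_n -> R) (i : 'I_n) : R := L i / (INR n * avg L).

Section FiniteSum.
Variables n d : nat.
Variables (fi : 'I_n -> vec d -> R) (gfi : 'I_n -> vec d -> vec d).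
Variables (H Hinv : mat d) (L : 'I_n -> R).
Hypothesis n_pos : (0 < n)%N.
Hypothesis convex_fi : forall i, convex_fun (fi i).
Hypothesis grad_fi : forall i x, has_gradient_at (fi i) (gfi i x) x.
Hypothesis HSPD : symmetric_pd H.
Hypothesis HHinv : is_inverse H Hinv.
Hypothesis L_ge0 : forall i, 0 <= L i.
Hypothesis lip_fi : forall i x y,
  wnorm Hinv (vsub (gfi i x) (gfi i y)) <= L i * wnorm H (vsub x y).

Let f x := avg (fun i => fi i x).
Let gf x : vec d := fun k => avg (fun i => gfi i x k).
Let p := importance L.

Lemma n_gt0 : 0 < INR n.
Proof. by apply: lt_0_INR; apply/ltP. Qed.

Lemma avg_ge0 : 0 <= avg L.
Proof.
by apply: Rmult_le_pos; [left; apply: Rinv_0_lt_compat; apply: n_gt0 | apply: rsum_ge0].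
Qed.

Lemma avg_bregman x y : bregman f gf x y = avg (fun i => bregman (fi i) (gfi i) x y).
Proof.
rewrite /bregman /f /avg.
have -> : dot (gf x) (vsub y x) = / INR n * rsum (fun i => dot (gfi i x) (vsub y x)).
  rewrite -rsum_scal dot_rsum_l; congr dot.
  by apply: functional_extensionality => k; rewrite /gf /avg rsum_scal.
by rewrite -!Rmult_minus_distr_l -!rsum_sub.
Qed.

Lemma avg_smooth x y : bregman f gf x y <= avg L / 2 * sqnorm H (vsub y x).
Proof.
rewrite avg_bregman.
have -> : avg L / 2 * sqnorm H (vsub y x) = avg (fun i => L i / 2 * sqnorm H (vsub y x)).
  by rewrite /avg /Rdiv rsum_scalr rsum_scalr; ring.
apply: avg_le => i.
exact: (bregman_le_smooth (grad_fi i) HSPD HHinv (L_ge0 i) (lip_fi i)).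
Qed.

Lemma importance_sum1 : avg L <> 0 -> rsum p = 1.
Proof.
move=> Lavg0; have sum0 : rsum L <> 0 by move=> e; apply: Lavg0; rewrite /avg e; ring.
have nR := n_gt0; rewrite /p /importance /Rdiv rsum_scalr /avg; field; lra.
Qed.

Variables xk yk xs : vec d.

Let Z i : vec d := fun k => (gfi i yk k - gfi i xs k) / (INR n * p i).

Lemma importance_wmean : 0 < avg L ->
  forall k, wmean p Z k = gf yk k - gf xs k.
Proof.
move=> Lavg_pos k; have nR := n_gt0.
rewrite /wmean /gf /avg -Rmult_minus_distr_l -rsum_sub -rsum_scal.
apply: rsum_ext => i; case: (Req_dec (L i) 0) => [Li0|Li_ne0].
  have -> := lipschitz0_const HSPD HHinv (L_ge0 i) (lip_fi i) Li0 yk xs k.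
  by rewrite /p /importance Li0 /Rdiv !Rmult_0_l; ring.
by rewrite /Z /p /importance; field; repeat split; lra.
Qed.

(* One component of the importance-weighted second moment: the weight p_i
   cancels one factor L_i of the gradient-difference bound. *)
Lemma importance_term_bound z i : 0 < avg L ->
  p i * sqnorm Hinv (Z i) <= / INR n * (2 * avg L * sqnorm H (vsub xk yk) * L i
    + 8 * avg L * (bregman (fi i) (gfi i) z xk + bregman (fi i) (gfi i) z xs)).
Proof.
move=> Lavg_pos; have nR := n_gt0; have S0 := sqnorm_ge0 HSPD (vsub xk yk).
have Bx := bregman_ge0 (grad_fi i) (convex_fi i) z xk.
have Bs := bregman_ge0 (grad_fi i) (convex_fi i) z xs.
case: (Req_dec (L i) 0) => [Li0|Li_ne0].
  rewrite /p /importance Li0 /Rdiv !Rmult_0_l.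
  by apply: Rmult_le_pos; [left; apply: Rinv_0_lt_compat | have := avg_ge0; nra].
have Li_pos : 0 < L i by have := L_ge0 i; lra.
have -> : Z i = vscale (/ (INR n * p i)) (vsub (gfi i yk) (gfi i xs)).
  by apply: functional_extensionality => k; rewrite /Z /vscale /vsub /Rdiv; ring.
rewrite sqnorm_scale -Rmult_assoc.
have -> : p i * (/ (INR n * p i)) ^ 2 = avg L / (INR n * L i).
  by rewrite /p /importance; field; repeat split; lra.
have := gradient_difference_bound (grad_fi i) HSPD HHinv (L_ge0 i) (lip_fi i)
  (convex_fi i) Li_pos xk yk xs z.
set G := sqnorm Hinv _ => bound.
have weight0 : 0 <= avg L / (INR n * L i).
  by apply: Rmult_le_pos; [lra | left; apply: Rinv_0_lt_compat; nra].
apply: Rle_trans (Rmult_le_compat_l _ _ _ weight0 bound) _.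
by right; field; lra.
Qed.

Lemma importance_second_moment z : 0 < avg L ->
  rsum (fun i => p i * sqnorm Hinv (Z i)) <=
  2 * avg L ^ 2 * sqnorm H (vsub xk yk)
  + 8 * avg L * (bregman f gf z xk + bregman f gf z xs).
Proof.
move=> Lavg_pos; apply: Rle_trans (rsum_le (importance_term_bound z ^~ Lavg_pos)) _.
rewrite rsum_scal -/(avg _) avg_add !avg_scal avg_add -!avg_bregman.
by right; ring.
Qed.

Lemma minibatch_error_bound b z : (0 < b)%N ->
  expect p (fun B : {ffun 'I_b -> 'I_n} => sqnorm Hinv (vsub (fun k =>
      / INR b * rsum (fun j => (gfi (B j) yk k - gfi (B j) xs k) / (INR n * p (B j)))
      + gf xs k) (gf yk))) <=
  2 * avg L ^ 2 / INR b * sqnorm H (vsub xk yk)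
  + 8 * avg L / INR b * (bregman f gf z xk + bregman f gf z xs).
Proof.
move=> b_pos; have bR : 0 < INR b by apply: lt_0_INR; apply/ltP.
case: (Req_dec (avg L) 0) => [Lavg0|Lavg_ne0].
  rewrite expect_null_weights // => [|i]; last by rewrite /p /importance Lavg0 Rmult_0_r /Rdiv Rinv_0 Rmult_0_r.
  by rewrite Lavg0 /Rdiv; right; ring.
have Lavg_pos : 0 < avg L by have := avg_ge0; lra.
under expect_ext => B.
  have -> : vsub (fun k => / INR b * rsum (fun j =>
        (gfi (B j) yk k - gfi (B j) xs k) / (INR n * p (B j))) + gf xs k) (gf yk) =
      (fun k => / INR b * rsum (fun j => Z (B j) k) - wmean p Z k).
    by apply: functional_extensionality => k; rewrite importance_wmean // /vsub /Z; ring.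
  over.
apply: Rle_trans (minibatch_variance (importance_sum1 Lavg_ne0)
  (sqnorm_inv_ge0 HSPD HHinv) Z b_pos) _.
have := importance_second_moment z Lavg_pos.
have ib : 0 <= / INR b by left; apply: Rinv_0_lt_compat.
move/(Rmult_le_compat_l _ _ _ ib); rewrite /Rdiv; lra.
Qed.
End FiniteSum.
Theorem lemma6
  (n d b : nat) (Hn : (0 < n)%N) (Hb : (0 < b)%N)
  (fi : 'I_n -> vec d -> R) (gfi : 'I_n -> vec d -> vec d)
  (h : vec d -> option R) (H Hinv : mat d)
  (L : 'I_n -> R) (mu : R)
  (* standing setting *)
  (Hconv : forall i, convex_fun (fi i))
  (Hdiff : forall i x, has_gradient_at (fi i) (gfi i x) x)
  (Hproper : proper_fun h) (Hhconv : convex_ext h) (Hlsc : lsc_ext h)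
  (Hclosed : closed_dom h)
  (HSPD : symmetric_pd H) (HHinv : is_inverse H Hinv) :
  let f : vec d -> R := fun x => / INR n * rsum (fun i => fi i x) in
  let gf : vec d -> vec d := fun x k => / INR n * rsum (fun i => gfi i x k) in
  let Lavg : R := / INR n * rsum L in
  let F : vec d -> option R := Fext f h in
  (* Assumption 1 *)
  (forall i, 0 <= L i) ->
  (forall i (x y : vec d),
      wnorm Hinv (vsub (gfi i x) (gfi i y)) <= L i * wnorm H (vsub x y)) ->
  (* Assumption 2 *)
  0 < mu ->
  (forall x y : vec d,
      f y >= f x + dot (gf x) (vsub y x) + mu / 2 * sqnorm H (vsub y x)) ->
  forall xstar : vec d,
  (* x* = argmin F *)
  (forall x, ele (F xstar) (F x)) ->
  forall (xk yk xs : vec d),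
  let p : 'I_n -> R := fun i => L i / (INR n * Lavg) in
  let v : {ffun 'I_b -> 'I_n} -> vec d := fun B k =>
    / INR b * rsum (fun j : 'I_b =>
        (gfi (B j) yk k - gfi (B j) xs k) / (INR n * p (B j))) + gf xs k in
  let Delta : {ffun 'I_b -> 'I_n} -> vec d := fun B => vsub (v B) (gf yk) in
  (* expectation over b i.i.d. draws with probabilities p *)
  let E : R := rsum (fun B : {ffun 'I_b -> 'I_n} =>
                 rprod (fun j : 'I_b => p (B j)) * sqnorm Hinv (Delta B)) in
  ele (Some E)
    (match F xk, F xs, F xstar with
     | Some Fx, Some Fs, Some Fst =>
         Some (2 * Lavg ^ 2 / INR b * sqnorm H (vsub xk yk)
               + 8 * Lavg / INR b * (Fx - Fst + (Fs - Fst)))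
     | _, _, _ => None
     end).
Proof.
move=> f gf Lavg F L_ge0 lip_fi _ _ xstar opt xk yk xs p v Delta E.
rewrite /F /Fext; case hk: (h xk) => [hxk|] //=; case hs: (h xs) => [hxs|] //=.
case hst: (h xstar) => [hxst|] //=.
change Lavg with (avg L); change f with (fun x => avg (fun i => fi i x)) => /=.
apply: Rle_trans (minibatch_error_bound Hn Hconv Hdiff HSPD HHinv L_ge0 lip_fi
  xk yk xs xstar Hb) _.
have gap := bregman_le_gap Hhconv (avg_smooth Hdiff HSPD HHinv L_ge0 lip_fi) hst opt.
have gap_k := gap _ _ hk; have gap_s := gap _ _ hs.
have scale0 : 0 <= 8 * avg L / INR b.
  apply: Rmult_le_pos; first by have := avg_ge0 Hn L_ge0; lra.
  by left; apply: Rinv_0_lt_compat; apply: lt_0_INR; apply/ltP.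
have := Rmult_le_compat_l _ _ _ scale0 (Rplus_le_compat _ _ _ _ gap_k gap_s).
lra.
Qed.
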